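(* Let $k,\ell$ be integers with $1\leq k\leq \ell$, let $L$ be a (right) Leibniz algebra and let $B$ be an ideal of $L$ which is $\mathrm{Es}_k$-right nil. Let $P=a_ma_{m-1}\cdots a_2a_1$ be a right product of elements $a_1,\dots,a_m\in L$ of which at least $2\ell$ belong to $B$. Then $P\in (B^{\ell})_{(L,k)}$.
   Context: A (right) Leibniz algebra is a vector space $L$ over a field $F$ (characteristic $\neq 2$, finite-dimensional) with a bilinear product $(x,y)\mapsto xy$ satisfying $x(yz)=(xy)z-(xz)y$. For subspaces $U,V$, $UV$ is the span of all $uv$; right powers $B^1=B$, $B^{j+1}=B^jB$. An ideal is a subspace $B$ with $LB\subseteq B$, $BL\subseteq B$. Right product: $a_m\cdots a_1:=((\cdots((a_ma_{m-1})a_{m-2})\cdots)a_2)a_1$. For a subspace $D\subseteq L$ and integer $k\geq 1$, $D_{(L,k)}$ is the subspace spanned by all right products $d\,x_k\cdots x_2x_1$ with $d\in D$, $x_1,\dots,x_k\in L$. $\mathrm{Ess}(L)$ is the ideal generated by all squares $xx$, and $\mathrm{Es}(B)=B\cap\mathrm{Ess}(L)$. A nonzero ideal $B$ is called $\mathrm{Es}_k$-right nil if $\mathrm{Es}(B)_{(L,k)}=\{0\}$. *)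

From HB Require Import structures.
From mathcomp Require Import all_boot all_order all_algebra.
Set Implicit Arguments. Unset Strict Implicit. Unset Printing Implicit Defensive.
Import GRing.Theory.
Local Open Scope ring_scope.

Section Leibniz.
Variables (F : fieldType) (V : vectType F) (mul : V -> V -> V).

Definition bilinear_prod : Prop :=
  (forall a : V, linear (mul a)) /\ (forall b : V, linear (fun a => mul a b)).

Definition right_leibniz : Prop :=
  forall x y z : V, mul x (mul y z) = mul (mul x y) z - mul (mul x z) y.

(* right product a_m ... a_1 := ((..(a_m a_{m-1}) ..) a_2) a_1, encoded as
   rprod a_m [:: a_{m-1}; ...; a_1] *)
Definition rprod (a : V) (s : seq V) : V := foldl mul a s.

Fixpoint tuples (s : seq V) (k : nat) : seq (seq V) :=
  if k is k'.+1 then [seq x :: t | x <- s, t <- tuples s k'] else [:: [::]].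

(* UW = span of all uw (by bilinearity: span of products of basis vectors) *)
Definition prodv (U W : {vspace V}) : {vspace V} :=
  <<[seq mul u w | u <- vbasis U, w <- vbasis W]>>%VS.

Fixpoint rpow (B : {vspace V}) (n : nat) : {vspace V} :=
  match n with
  | 0 | 1 => B
  | n'.+1 => prodv (rpow B n') B
  end.

(* D_(L,k) = span of all d x_k ... x_1 (by multilinearity: basis vectors) *)
Definition rspan (D : {vspace V}) (k : nat) : {vspace V} :=
  <<[seq rprod d xs | d <- vbasis D, xs <- tuples (vbasis fullv) k]>>%VS.

Definition is_ideal (B : {vspace V}) : Prop :=
  forall x b : V, b \in B -> mul x b \in B /\ mul b x \in B.

Definition in_Ess (x : V) : Prop :=
  forall I : {vspace V}, is_ideal I -> (forall y : V, mul y y \in I) -> x \in I.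

(* B is Es_k-right nil: B nonzero and Es(B)_(L,k) = 0, i.e. every generator
   d x_k ... x_1 with d in Es(B) = B ∩ Ess(L) vanishes *)
Definition Es_right_nil (B : {vspace V}) (k : nat) : Prop :=
  B != 0%VS /\
  forall (d : V) (xs : seq V), d \in B -> in_Ess d -> size xs = k ->
    rprod d xs = 0.

End Leibniz.

From HB Require Import structures.
From mathcomp Require Import all_boot all_order all_algebra zify.
Import GRing.Theory.
Local Open Scope ring_scope.

(* The identity (uw)x = u(wx) + (ux)w makes every right power B^n stable
   under right multiplication by L, so a right product of a_m, ..., a_1 in
   which j >= 1 of the factors lie in B belongs to B^j.  Cut P after its last
   k factors: the remaining prefix still contains at least 2l - k >= l
   factors from B, hence lies in B^l, and P is that prefix multiplied on the
   right by k elements of L. *)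

Section RightProducts.
Variables (F : fieldType) (V : vectType F) (mul : V -> V -> V).
Hypothesis hbil : bilinear_prod mul.

Lemma mulDr a u v : mul a (u + v) = mul a u + mul a v.
Proof. by have [_ ->] := GRing.semilinear_linear (hbil.1 a). Qed.

Lemma mulZr a c u : mul a (c *: u) = c *: mul a u.
Proof. by have [-> _] := GRing.semilinear_linear (hbil.1 a). Qed.

Lemma mulDl b u v : mul (u + v) b = mul u b + mul v b.
Proof. by have [_ ->] := GRing.semilinear_linear (hbil.2 b). Qed.

Lemma mulZl b c u : mul (c *: u) b = c *: mul u b.
Proof. by have [-> _] := GRing.semilinear_linear (hbil.2 b). Qed.

Lemma mul0l b : mul 0 b = 0.
Proof. by have := mulZl b 0 0; rewrite !scale0r. Qed.

Lemma mul0r a : mul a 0 = 0.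
Proof. by have := mulZr a 0 0; rewrite !scale0r. Qed.

Lemma mul_suml b n (c : 'I_n -> F) (v : 'I_n -> V) :
  mul (\sum_i c i *: v i) b = \sum_i c i *: mul (v i) b.
Proof.
rewrite (big_morph (mul^~ b) (mulDl b) (mul0l b)).
by apply: eq_bigr => i _; rewrite mulZl.
Qed.

Lemma mul_sumr a n (c : 'I_n -> F) (v : 'I_n -> V) :
  mul a (\sum_i c i *: v i) = \sum_i c i *: mul a (v i).
Proof.
rewrite (big_morph (mul a) (mulDr a) (mul0r a)).
by apply: eq_bigr => i _; rewrite mulZr.
Qed.

Lemma span_ind (S : seq V) (P : V -> Prop) :
  P 0 -> (forall c u v, P u -> P v -> P (c *: u + v)) ->
  {in S, forall g, P g} -> forall v, v \in <<S>>%VS -> P v.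
Proof.
move=> P0 PD PS v /(@coord_span _ _ _ (in_tuple S)) ->.
apply: (big_ind P) => // [x y Px Py|i _].
  by rewrite -(scale1r x); apply: PD.
by rewrite -[_ *: _]addr0; apply: PD => //; apply/PS/mem_nth.
Qed.

Lemma span_mul_closed (S : seq V) (W : {vspace V}) x :
  {in S, forall g, mul g x \in W} -> forall v, v \in <<S>>%VS -> mul v x \in W.
Proof.
apply: span_ind; first by rewrite mul0l mem0v.
by move=> c u v Pu Pv; rewrite mulDl mulZl memvD ?memvZ.
Qed.

Lemma memv_prodv (U W : {vspace V}) u w :
  u \in U -> w \in W -> mul u w \in prodv mul U W.
Proof.
move=> /coord_vbasis -> /coord_vbasis ->.
rewrite mul_suml; apply: memv_suml => i _; apply: memvZ.
rewrite mul_sumr; apply: memv_suml => j _; apply: memvZ.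
by apply/memv_span/allpairs_f; rewrite mem_nth ?size_tuple.
Qed.

Lemma mem_tuples (S : seq V) k ys :
  (ys \in tuples S k) = (size ys == k) && all (mem S) ys.
Proof.
elim: k ys => [|k IH] ys /=; first by rewrite inE; case: ys.
apply/allpairsP/idP => [[[x t] /= [xS tT ->]]|].
  by move: tT; rewrite IH /= xS eqSS.
case: ys => //= x t; rewrite eqSS => /and3P[st xS alt].
by exists (x, t); rewrite IH st.
Qed.

Lemma rprod_rcons a s x : rprod mul a (rcons s x) = mul (rprod mul a s) x.
Proof. exact: foldl_rcons. Qed.

Lemma rspanS (D : {vspace V}) k v x :
  v \in rspan mul D k -> mul v x \in rspan mul D k.+1.
Proof.
apply: span_mul_closed => _ /allpairsP[[d ys] /= [dD ysT ->]].
rewrite (coord_vbasis (memvf x)) mul_sumr; apply: memv_suml => i _.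
apply: memvZ; rewrite -rprod_rcons; apply/memv_span/allpairs_f => //.
have xi : (vbasis fullv)`_i \in vbasis (fullv : {vspace V}).
  by rewrite mem_nth ?size_tuple.
by move: ysT; rewrite !mem_tuples size_rcons all_rcons eqSS /= xi.
Qed.

Lemma rprod_mem_rspan (D : {vspace V}) d xs :
  d \in D -> rprod mul d xs \in rspan mul D (size xs).
Proof.
move=> dD; elim/last_ind: xs => [|xs x IH].
  rewrite (coord_vbasis dD); apply: memv_suml => i _; apply/memvZ/memv_span.
  have := @allpairs_f _ _ _ (rprod mul) (vbasis D) (tuples (vbasis fullv) 0)
    (vbasis D)`_i [::].
  by apply; rewrite ?mem_nth ?size_tuple ?inE.
by rewrite size_rcons rprod_rcons; apply: rspanS.
Qed.

Hypothesis hleib : right_leibniz mul.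
Variable B : {vspace V}.
Hypothesis hB : is_ideal mul B.

Lemma rpow_mulr n v x : v \in rpow mul B n -> mul v x \in rpow mul B n.
Proof.
elim: n x v => [|[|n] IH] x v; try by move=> /(hB x)[].
apply: span_mul_closed => _ /allpairsP[[u w] /= [uB wB ->]].
move: uB wB => /vbasis_mem uB /vbasis_mem wB.
have -> : mul (mul u w) x = mul u (mul w x) + mul (mul u x) w.
  by rewrite hleib subrK.
by rewrite memvD ?memv_prodv ?IH //; case: (hB x w wB).
Qed.

Lemma rpowS_mul n v b :
  v \in rpow mul B n -> b \in B -> mul v b \in rpow mul B n.+1.
Proof.
by case: n => [|n] vB bB; [case: (hB b v vB) | apply: memv_prodv].
Qed.

Lemma rpowS_sub n v : v \in rpow mul B n.+1 -> v \in rpow mul B n.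
Proof.
case: n => [//|n]; move: v; apply: span_ind.
- exact: mem0v.
- by move=> c u v Pu Pv; rewrite memvD ?memvZ.
by move=> _ /allpairsP[[u w] /= [/vbasis_mem uB _ ->]]; exact: (rpow_mulr n.+1).
Qed.

Lemma rpow_sub m n v : (n <= m)%N -> v \in rpow mul B m -> v \in rpow mul B n.
Proof.
move=> /subnK <-; elim: (m - n)%N => [//|d IH] /= H.
exact/IH/rpowS_sub.
Qed.

Lemma rprod_mem_rpow_count a s (j := count (fun x => x \in B) (a :: s)) :
  (0 < j)%N -> rprod mul a s \in rpow mul B j.
Proof.
rewrite {}/j; elim/last_ind: s => [|s x IH] /=; first by case aB: (a \in B).
rewrite rprod_rcons -cats1 count_cat /= addn0.
case xB: (x \in B) => /=; last by rewrite addn0 => /IH; apply: rpow_mulr.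
rewrite addn1 addnS => _; move: IH.
case: (posnP ((a \in B) + count (fun x => x \in B) s)) => [->|j_gt0 IH].
  by case: (hB (rprod mul a s) x xB).
exact/rpowS_mul/xB/IH.
Qed.

End RightProducts.

Theorem lemma4p3 (F : fieldType) (V : vectType F) (mul : V -> V -> V)
  (hchar : (2%:R : F) != 0)
  (hbil : bilinear_prod mul) (hleib : right_leibniz mul)
  (k l : nat) (hk : (1 <= k)%N) (hkl : (k <= l)%N)
  (B : {vspace V}) (hB : is_ideal mul B) (hnil : Es_right_nil mul B k)
  (a : V) (s : seq V)
  (hcount : (2 * l <= count (fun x => x \in B) (a :: s))%N) :
  rprod mul a s \in rspan mul (rpow mul B l) k.
Proof.
have k_le_s : (k <= size s)%N.
  by move: hcount (count_size (fun x => x \in B) (a :: s)) => /=; lia.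
move: hcount; rewrite -(cat_take_drop (size s - k) s) /rprod foldl_cat.
set pre := take _ s; set suf := drop _ s.
rewrite -/(rprod mul _ _) /= count_cat => hcount.
have size_suf : size suf = k by rewrite size_drop; lia.
have count_pre : (l <= count (fun x => x \in B) (a :: pre))%N.
  by move: (count_size (fun x => x \in B) suf); rewrite /= size_suf; lia.
rewrite -{1}size_suf; apply: rprod_mem_rspan => //.
apply: (@rpow_sub _ _ mul hbil hleib B hB _ _ _ count_pre).
by apply: rprod_mem_rpow_count => //; lia.
Qed.
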